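(* Let $X,Y$ be Banach spaces, let $F:X\rightrightarrows Y$ be a closed convex set-valued mapping, let $A\subset X$ be a closed convex set, let $\bar y\in Y$, put $S:=F^{-1}(\bar y)\cap A$, and let $\bar x\in S$. Then $$\frac{1}{{\rm ssubreg}_AF(\bar x,\bar y)}=\sup\{\eta>0:\ DF^{-1}(\bar y,\bar x)(\eta_1B_Y)\cap(T(A,\bar x)+\eta_2B_X)\subset B_X\ \text{for all }\eta_1,\eta_2\ge0\text{ with }\eta_1+\eta_2<\eta\}.$$
   Context: $B_X,B_Y$ are the closed unit balls; $B(x,\delta)$ is the open ball. $F$ closed convex means ${\rm gph}(F)=\{(x,y):y\in F(x)\}$ is closed and convex in $X\times Y$. For a closed convex set $C$ and $a\in C$, the contingent cone $T(C,a)$ is the set of $v$ for which there exist $v_n\to v$, $t_n\to0^+$ with $a+t_nv_n\in C$ for all $n$. For $(x,y)\in{\rm gph}(F)$, $DF^{-1}(y,x)(v):=\{u\in X:(u,v)\in T({\rm gph}(F),(x,y))\}$ and $DF^{-1}(y,x)(W)=\bigcup_{v\in W}DF^{-1}(y,x)(v)$ for $W\subset Y$. The modulus of strong metric subregularity is ${\rm ssubreg}_AF(\bar x,\bar y):=\inf\{\tau>0:\exists\delta>0$ such that $\|x-\bar x\|\le\tau(d(\bar y,F(x))+d(x,A))$ for all $x\in B(\bar x,\delta)\}$, with $\inf\emptyset=+\infty$, $\sup\emptyset=0$, $1/(+\infty)=0$, $1/0=+\infty$. *)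

From mathcomp Require Import all_boot all_algebra.
From mathcomp Require Import all_classical all_reals all_analysis.
Import GRing.Theory Num.Theory.
Import numFieldNormedType.Exports.
Local Open Scope ring_scope.
Local Open Scope classical_set_scope.

Set Implicit Arguments. Unset Strict Implicit. Unset Printing Implicit Defensive.

Definition gph {X Y : Type} (F : X -> set Y) : set (X * Y) :=
  [set p | F p.1 p.2].

Definition closed_convex_map {R : realType} {X Y : normedModType R}
  (F : X -> set Y) : Prop := closed (gph F) /\ convex_set (gph F : set (X * Y)).

Definition cball1 {R : realType} {V : normedModType R} : set V :=
  [set x | `|x| <= 1].

Definition scale_set {R : realType} {V : lmodType R} (eta : R) (W : set V) : set V :=
  [set eta *: w | w in W].

Definition sum_set {R : realType} {V : lmodType R} (U W : set V) : set V :=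
  [set u + w | u in U & w in W].

Definition contingent_cone {R : realType} {V : normedModType R} (C : set V) (a : V)
  : set V :=
  [set v | exists (vn : nat -> V) (tn : nat -> R),
     vn @ \oo --> v /\ tn @ \oo --> 0 /\ (forall n, 0 < tn n) /\
     (forall n, C (a + tn n *: vn n))].

Definition coderiv_inv {R : realType} {X Y : normedModType R}
  (F : X -> set Y) (y : Y) (x : X) (v : Y) : set X :=
  [set u | contingent_cone (gph F) (x, y) (u, v)].

Definition coderiv_inv_set {R : realType} {X Y : normedModType R}
  (F : X -> set Y) (y : Y) (x : X) (W : set Y) : set X :=
  \bigcup_(v in W) coderiv_inv F y x v.

(* distance d(x,S) = inf {||x - s|| : s in S}, in \bar R (inf of empty = +oo) *)
Definition edist {R : realType} {V : normedModType R} (x : V) (S : set V) : \bar R :=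
  ereal_inf [set (`|x - s|)%:E | s in S].

(* modulus of strong metric subregularity relative to A; inf of empty = +oo *)
Definition ssubreg {R : realType} {X Y : normedModType R}
  (A : set X) (F : X -> set Y) (xb : X) (yb : Y) : \bar R :=
  ereal_inf [set tau%:E | tau in
    [set tau : R | 0 < tau /\ exists delta : R, 0 < delta /\
       forall x : X, `|x - xb| < delta ->
         ((`|x - xb|)%:E <= tau%:E * (edist yb (F x) + edist x A))%E]].

Definition einv_conv {R : realType} (x : \bar R) : \bar R :=
  if x == +oo%E then 0%E else if x == 0%E then +oo%E else (1 / fine x)%:E.

Definition sup_conv {R : realType} (S : set \bar R) : \bar R :=
  if S == set0 then 0%E else ereal_sup S.

From Pilot Require Import Defs.
From mathcomp Require Import all_boot all_order all_algebra.
From mathcomp Require Import all_classical all_reals all_analysis.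
Import Order.TTheory GRing.Theory Num.Theory.
Import numFieldNormedType.Exports.
Local Open Scope ring_scope.
Local Open Scope classical_set_scope.

Set Implicit Arguments.
Unset Strict Implicit.
Unset Printing Implicit Defensive.

(* A subregularity bound with modulus tau passes to the limit along contingent
   directions: |z| <= tau (|v| + |z - w|) whenever (z, v) is contingent to gph F
   at (xb, yb) and w to A at xb, which is the ball inclusion for eta = 1/tau.
   Conversely, by convexity ((x - xb)/t, (y - yb)/t) is contingent to gph F for
   every y in F x and t > 0, so the inclusion for eta bounds eta |x - xb| by
   |yb - y| + |x - a| for all y in F x and a in A, which is a global subregularity bound for every tau > 1/eta.
   The reciprocal of the infimum of the moduli is then the supremum of the radii. *)

Section extended_inverse.
Variable R : realType.

Lemma le_einv_conv (m : \bar R) (e : R) :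
  0 < e -> (0 <= m)%E -> (m <= e^-1%:E)%E -> (e%:E <= einv_conv m)%E.
Proof.
move=> e0; case: m => [r||] //= r0 re; rewrite /einv_conv /=.
have [->|rn0] := eqVneq r 0; first by rewrite eqxx leey.
rewrite eqe (negbTE rn0) lee_fin div1r -[e]invrK lef_pV2 ?posrE ?invr_gt0 //.
by rewrite lt_neqAle eq_sym rn0 -lee_fin.
Qed.

Lemma einv_conv_le (m : \bar R) (e : R) :
  0 < e -> (e^-1%:E <= m)%E -> (einv_conv m <= e%:E)%E.
Proof.
move=> e0; case: m => [r||] //= er; rewrite /einv_conv /=; last exact: ltW.
have r0 : 0 < r by rewrite -lte_fin; apply: lt_le_trans er; rewrite lte_fin invr_gt0.
rewrite eqe gt_eqF // lee_fin div1r -[e]invrK lef_pV2 ?posrE ?invr_gt0 //.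
Qed.

Lemma einv_conv_inf_eq_sup_conv (T E : set R) :
  (forall t, T t -> 0 < t) -> (forall e, E e -> 0 < e) ->
  (forall t, T t -> E t^-1) -> (forall e t, E e -> e^-1 < t -> T t) ->
  einv_conv (ereal_inf [set t%:E | t in T]) = sup_conv [set e%:E | e in E].
Proof.
move=> T_gt0 E_gt0 TE ET.
have [[t0 Tt0]|T0] := pselect (exists t, T t); last first.
  have E0 : E = set0.
    apply/seteqP; split => // e Ee; apply: T0.
    by exists (e^-1 + 1); apply: ET Ee _; rewrite ltrDl.
  have {}T0 : T = set0 by apply/seteqP; split => // t Tt; apply: T0; exists t.
  by rewrite T0 E0 !image_set0 ereal_inf0 /einv_conv /sup_conv !eqxx.
have -> : sup_conv [set e%:E | e in E] = ereal_sup [set e%:E | e in E].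
  rewrite /sup_conv ifF //; apply/negbTE/set0P.
  by exists t0^-1%:E; exists t0^-1 => //; exact: TE.
set m := ereal_inf _; set s := ereal_sup _.
have m_ge0 : (0 <= m)%E.
  by apply: le_ereal_inf_tmp => _ [t Tt <-]; rewrite lee_fin ltW ?T_gt0.
apply/eqP; rewrite eq_le; apply/andP; split; last first.
  apply: ge_ereal_sup => _ [e Ee <-]; apply: le_einv_conv; rewrite ?E_gt0 //.
  apply/lee_addgt0Pr => eps eps0; apply: ereal_inf_lbound.
  by exists (e^-1 + eps) => //; apply: ET Ee _; rewrite ltrDl.
have inv_le_s t : T t -> (t^-1%:E <= s)%E.
  by move=> Tt; apply: ereal_sup_ubound; exists t^-1 => //; exact: TE.
have := inv_le_s _ Tt0; case: s inv_le_s => [s'||] // inv_le_s t0s; last exact: leey.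
have s'0 : 0 < s' by rewrite -lte_fin; apply: lt_le_trans t0s; rewrite lte_fin invr_gt0 T_gt0.
apply: einv_conv_le => //; apply: le_ereal_inf_tmp => _ [t Tt <-].
have t_gt0 := T_gt0 _ Tt.
by rewrite lee_fin -[t]invrK lef_pV2 ?posrE ?invr_gt0 // -lee_fin inv_le_s.
Qed.

End extended_inverse.

Section convex_geometry.
Variable R : realType.

Lemma convex_ray_shrink (V : lmodType R) (C : set V) (a w : V) (s t : R) :
  convex_set (C : set (convex_lmodType V)) -> C a -> C (a + s *: w) ->
  0 < t -> t <= s -> C (a + t *: w).
Proof.
move=> convC Ca Cs t0 ts.
have s0 : 0 < s by apply: lt_le_trans ts.
have ts0 : 0 <= t / s by rewrite divr_ge0 // ltW.
have ts1 : t / s <= 1 by rewrite ler_pdivrMr // mul1r.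
have := convC (a + s *: w) a (Itv01 ts0 ts1); rewrite !inE => /(_ Cs Ca).
rewrite /conv /=.
suff -> : (t / s) *: (a + s *: w) + unstable.onem (t / s) *: a = a + t *: w by [].
rewrite /unstable.onem scalerDr scalerA divfK ?gt_eqF // scalerBl scale1r.
by rewrite addrC addrA subrK.
Qed.

Lemma contingent_cone_convex (V : normedModType R) (C : set V) (a c : V) (k : R) :
  convex_set (C : set (convex_lmodType V)) -> C a -> C c -> 0 < k ->
  contingent_cone C a (k *: (c - a)).
Proof.
move=> convC Ca Cc k0.
exists (fun=> k *: (c - a)), (fun n => k^-1 * harmonic n); split; first exact: cvg_cst.
split; first by rewrite -(mulr0 k^-1); apply: cvgMl_tmp; exact: cvg_harmonic.
split=> [n|n]; first by rewrite mulr_gt0 ?invr_gt0 ?harmonic_gt0.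
rewrite scalerA mulrAC mulVf ?gt_eqF // mul1r.
apply: (convex_ray_shrink (s := 1) convC Ca).
- by rewrite scale1r addrC subrK.
- exact: harmonic_gt0.
- by rewrite /harmonic /= invf_le1 // ler1n.
Qed.

Lemma mem_scale_cball1 (V : normedModType R) (e : R) (z : V) :
  0 <= e -> `|z| <= e -> scale_set e cball1 z.
Proof.
move=> e_ge0 ze; have [e0|e_neq0] := eqVneq e 0.
  have -> : z = 0 by apply/normr0_eq0/le_anti; rewrite normr_ge0 andbT -e0.
  by exists 0; rewrite ?scaler0 // /cball1 /= normr0.
have e0 : 0 < e by rewrite lt_neqAle eq_sym e_neq0.
exists (e^-1 *: z); last by rewrite scalerA mulfV // scale1r.
by rewrite /cball1 /= normrZ ger0_norm ?invr_ge0 // ler_pdivrMl // mulr1.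
Qed.

End convex_geometry.

Section distance.
Variable R : realType.

Lemma edist_ge0 (V : normedModType R) (x : V) (S : set V) : (0 <= Defs.edist x S)%E.
Proof. by apply: le_ereal_inf_tmp => _ [s _ <-]; rewrite lee_fin. Qed.

Lemma edist_le (V : normedModType R) (x s : V) (S : set V) :
  S s -> (Defs.edist x S <= (`|x - s|)%:E)%E.
Proof. by move=> Ss; apply: ereal_inf_lbound; exists s. Qed.

Lemma le_edistD (V W : normedModType R) (x1 : V) (x2 : W)
    (S1 : set V) (S2 : set W) (r : R) :
  (forall s1 s2, S1 s1 -> S2 s2 -> r <= `|x1 - s1| + `|x2 - s2|) ->
  (r%:E <= Defs.edist x1 S1 + Defs.edist x2 S2)%E.
Proof.
move=> hr.
have le_d1 s2 : S2 s2 -> ((r - `|x2 - s2|)%:E <= Defs.edist x1 S1)%E.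
  move=> S2s2; apply: le_ereal_inf_tmp => _ [s1 S1s1 <-].
  by rewrite lee_fin lerBlDr hr.
have := edist_ge0 x1 S1; have := edist_ge0 x2 S2.
case: (Defs.edist x1 S1) le_d1 => [d1||] le_d1; case E2: (Defs.edist x2 S2) => [d2||] //= _ _;
  rewrite ?leey //.
rewrite -EFinD lee_fin -lerBlDl -lee_fin -E2.
apply: le_ereal_inf_tmp => _ [s2 S2s2 <-]; have := le_d1 _ S2s2.
by rewrite !lee_fin lerBlDr addrC -lerBlDr.
Qed.

End distance.

Section subregularity.
Variables (R : realType) (X Y : normedModType R).
Variables (F : X -> set Y) (A : set X) (xb : X) (yb : Y).

Definition subreg_bound (tau delta : R) : Prop :=
  forall x : X, `|x - xb| < delta ->
    ((`|x - xb|)%:E <= tau%:E * (Defs.edist yb (F x) + Defs.edist x A))%E.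

Definition coderiv_ball_incl (eta : R) : Prop :=
  forall eta1 eta2 : R, 0 <= eta1 -> 0 <= eta2 -> eta1 + eta2 < eta ->
    coderiv_inv_set F yb xb (scale_set eta1 cball1)
      `&` sum_set (contingent_cone A xb) (scale_set eta2 cball1) `<=` cball1.

Lemma subreg_bound_scaled (tau delta t : R) (u : X) (v : Y) (w : X) :
  0 <= tau -> subreg_bound tau delta -> 0 < t -> `|t *: u| < delta ->
  F (xb + t *: u) (yb + t *: v) -> A (xb + t *: w) ->
  `|u| <= tau * (`|v| + `|u - w|).
Proof.
move=> tau0 hT t0 tu Fx Aw.
have := hT (xb + t *: u); rewrite addrAC subrr add0r => /(_ tu) /le_trans.
move=> /(_ _ (lee_wpmul2l _ (leeD (edist_le yb Fx) (edist_le _ Aw)))).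
rewrite lee_fin tau0 -EFinD -EFinM lee_fin => /(_ isT).
rewrite opprD addNKr normrN addrC opprD addrACA subrr add0r -scalerBr !normrZ gtr0_norm //.
by rewrite -mulrDr mulrCA ler_pM2l // addrC.
Qed.

Hypotheses (convA : convex_set (A : set (convex_lmodType X))) (Axb : A xb).

Lemma subreg_contingent_bound (tau delta : R) (z : X) (v : Y) (w : X) :
  0 <= tau -> 0 < delta -> subreg_bound tau delta ->
  contingent_cone (gph F) (xb, yb) (z, v) -> contingent_cone A xb w ->
  `|z| <= tau * (`|v| + `|z - w|).
Proof.
move=> tau0 d0 hT [pn [tn [p_cvg [t_cvg [t_gt0 Fp]]]]] [wn [sn [w_cvg [_ [s_gt0 Aw]]]]].
have z_cvg : (fun m => (pn m).1) @ \oo --> z by apply: cvg_comp p_cvg _; exact: cvg_fst.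
have v_cvg : (fun m => (pn m).2) @ \oo --> v by apply: cvg_comp p_cvg _; exact: cvg_snd.
have tz_cvg : (fun m => tn m *: (pn m).1) @ \oo --> 0.
  by rewrite -(scale0r z); exact: cvgZ.
(* For fixed N, convexity puts xb + tn m *: wn N in A as soon as tn m <= sn N;
   let m, then N, tend to infinity in the scaled bound. *)
have bound_N N : `|z| <= tau * (`|v| + `|z - wn N|).
  rewrite -subr_ge0.
  apply: (@cvgr_to_ge _ \oo _ _
    (fun m => tau * (`|(pn m).2| + `|(pn m).1 - wn N|) - `|(pn m).1|)).
    apply: cvgB (cvg_norm z_cvg); apply: cvgMl_tmp.
    exact: cvgD (cvg_norm v_cvg) (cvg_norm (cvgB z_cvg (cvg_cst _))).
  near=> m; rewrite subr_ge0; apply: subreg_bound_scaled hT (t_gt0 m) _ (Fp m) _ => //.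
    by near: m; exact: cvgr0_norm_lt tz_cvg delta d0.
  apply: convex_ray_shrink convA Axb (Aw N) (t_gt0 m) _.
  near: m; apply: filterS (cvgr0_norm_lt _ t_cvg (sn N) (s_gt0 N)) => m.
  by rewrite gtr0_norm ?t_gt0 // => /ltW.
apply: (@cvgr_to_ge _ \oo _ _ (fun N => tau * (`|v| + `|z - wn N|))); last exact: nearW.
by apply: cvgMl_tmp; exact: cvgD (cvg_cst _) (cvg_norm (cvgB (cvg_cst _) w_cvg)).
Unshelve. all: by end_near.
Qed.

Lemma coderiv_ball_incl_inv (tau delta : R) :
  0 < tau -> 0 < delta -> subreg_bound tau delta -> coderiv_ball_incl tau^-1.
Proof.
move=> tau0 d0 hT eta1 eta2 eta1_ge0 eta2_ge0 eta_lt z.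
move=> [[v [b b1 <-] Fz] [w Tw [c [b' b'1 <-] wz]]].
have := subreg_contingent_bound (ltW tau0) d0 hT Fz Tw.
have -> : z - w = eta2 *: b' by rewrite -wz addrC addKr.
rewrite !normrZ !ger0_norm // => /le_trans; apply.
rewrite -(mulfV (lt0r_neq0 tau0)) ler_pM2l //.
by apply: le_trans (ltW eta_lt); apply: lerD; exact: ler_piMr.
Qed.

Hypotheses (convG : convex_set (gph F : set (X * Y))) (Fxb : F xb yb).

Lemma coderiv_ball_incl_dist (eta : R) (x : X) (y : Y) (a : X) :
  0 < eta -> coderiv_ball_incl eta -> F x y -> A a ->
  eta * `|x - xb| <= `|yb - y| + `|x - a|.
Proof.
move=> eta0 hE Fxy Aa; set K := `|yb - y| + `|x - a|.
have K_ge0 : 0 <= K by rewrite addr_ge0.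
rewrite mulrC -ler_pdivlMr //; apply/ler_addgt0Pr => e e0.
set t := K / eta + e.
have t0 : 0 < t by rewrite ltr_wpDl // divr_ge0 // ltW.
have t_inv_gt0 : 0 < t^-1 by rewrite invr_gt0.
(* Test the inclusion on (x - xb)/t: its image direction is (y - yb)/t and it splits
   as (a - xb)/t + (x - a)/t, with radii |yb - y|/t and |x - a|/t summing below eta. *)
have : cball1 (t^-1 *: (x - xb)).
  apply: (hE (`|yb - y| / t) (`|x - a| / t)).
  - exact: divr_ge0 (normr_ge0 _) (ltW t0).
  - exact: divr_ge0 (normr_ge0 _) (ltW t0).
  - by rewrite -mulrDl ltr_pdivrMr // mulrC -ltr_pdivrMr // ltrDl.
  split.
    exists (t^-1 *: (y - yb)).
      apply: mem_scale_cball1; first exact: divr_ge0 (normr_ge0 _) (ltW t0).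
      by rewrite normrZ gtr0_norm // mulrC distrC.
    by have := contingent_cone_convex (a := (xb, yb)) (c := (x, y)) convG Fxb Fxy t_inv_gt0.
  exists (t^-1 *: (a - xb)); first exact: contingent_cone_convex.
  exists (t^-1 *: (x - a)); last by rewrite -scalerDr addrC addrA subrK.
  apply: mem_scale_cball1; first exact: divr_ge0 (normr_ge0 _) (ltW t0).
  by rewrite normrZ gtr0_norm // mulrC.
by rewrite /cball1 /= normrZ gtr0_norm // ler_pdivrMl // mulr1.
Qed.

Lemma subreg_bound_inv_lt (eta tau delta : R) :
  0 < eta -> coderiv_ball_incl eta -> eta^-1 < tau -> subreg_bound tau delta.
Proof.
move=> eta0 hE eta_tau x _.
have tau0 : 0 < tau by apply: lt_trans eta_tau; rewrite invr_gt0.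
have dist_ge : ((eta * `|x - xb|)%:E <= Defs.edist yb (F x) + Defs.edist x A)%E.
  by apply: le_edistD => y a Fxy Aa; exact: coderiv_ball_incl_dist.
apply: le_trans (lee_wpmul2l _ dist_ge); last by rewrite lee_fin ltW.
rewrite -EFinM lee_fin mulrA ler_peMl // ltW // -ltr_pdivrMr // div1r; exact: eta_tau.
Qed.

End subregularity.

Theorem theorem3p3 (R : realType) (X Y : completeNormedModType R)
  (F : X -> set Y) (A : set X) (yb : Y) (xb : X) :
  closed_convex_map F -> closed A -> convex_set A ->
  (* xb ∈ S := F^{-1}(yb) ∩ A *)
  ([set x | F x yb] `&` A) xb ->
  einv_conv (ssubreg A F xb yb) =
  sup_conv [set eta%:E | eta in
    [set eta : R | 0 < eta /\
       forall eta1 eta2 : R, 0 <= eta1 -> 0 <= eta2 -> eta1 + eta2 < eta ->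
         coderiv_inv_set F yb xb (scale_set eta1 cball1)
           `&` sum_set (contingent_cone A xb) (scale_set eta2 cball1)
         `<=` cball1]].
Proof.
move=> [_ convG] _ convA [Fxb Axb]; apply: einv_conv_inf_eq_sup_conv.
- by move=> tau [].
- by move=> eta [].
- move=> tau [tau0 [delta [delta0 subreg]]]; split; first by rewrite invr_gt0.
  exact: coderiv_ball_incl_inv subreg.
- move=> eta tau [eta0 incl] eta_tau.
  have tau0 : 0 < tau by apply: lt_trans eta_tau; rewrite invr_gt0.
  split=> //; exists 1; split=> //; exact: subreg_bound_inv_lt incl eta_tau.
Qed.
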